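(* $\mathcal{L}_{FH}\preceq\mathcal{L}_{AIL}$: for every $\varphi\in\mathcal{L}_{FH}$ there exists $\psi\in\mathcal{L}_{AIL}$ such that for every epistemic model with awareness $M$ and every world $w$ of $M$, $M,w\vDash_{FH}\varphi$ iff $M,w\vDash_{AIL}\psi$.
   Context: Let $\mathcal{P}$ be a countable set of atoms and $\mathcal{G}$ a finite set of agents. An epistemic model with awareness is $M=\langle W,\{\sim_i,\mathscr{A}_i\}_{i\in\mathcal{G}},V\rangle$: $W\neq\emptyset$, $\sim_i$ an equivalence relation on $W$, $\mathscr{A}_i:W\to2^{\mathcal{P}}$ with $\mathscr{A}_i(w)=\mathscr{A}_i(v)$ whenever $(w,v)\in\sim_i$, $V:\mathcal{P}\to2^W$. $(w,v)\in\approx_i$ iff $\mathscr{A}_i(w)=\mathscr{A}_i(v)$ and $w,v$ agree on all $p\in\mathscr{A}_i(w)$. $\sim_i\circ\approx_i=\{(w,v):\exists t\,((w,t)\in\approx_i,(t,v)\in\sim_i)\}$; $R^+$ is the transitive closure. $\mathcal{L}_{AIL}$: $\varphi::=p\mid\neg\varphi\mid\varphi\wedge\varphi\mid A_i\varphi\mid I_i\varphi\mid E_i\varphi\mid[\approx]_i\varphi\mid[\circ^+]_i\varphi$; $\mathcal{L}_{FH}$ is the fragment without $[\approx]_i,[\circ^+]_i$. $\vDash_{AIL}$: $p$ iff $w\in V(p)$; Boolean usual; $A_i\varphi$ iff $At(\varphi)\subseteq\mathscr{A}_i(w)$ ($At$ = atoms occurring); $I_i\varphi$, $[\approx]_i\varphi$,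 $[\circ^+]_i\varphi$ iff $\varphi$ holds at all successors along $\sim_i$, $\approx_i$, $(\sim_i\circ\approx_i)^+$ respectively; $E_i\varphi$ iff $A_i\varphi$ and $[\circ^+]_i\varphi$ hold. $\vDash_{FH}$ on $\mathcal{L}_{FH}$ is the same except $E_i\varphi$ holds iff $A_i\varphi$ and $I_i\varphi$ hold. *)

From mathcomp Require Import all_boot.
From Stdlib Require Import Relation_Definitions Relation_Operators.

Set Implicit Arguments.


Unset Printing Implicit Defensive.

Section Logic.
Variables (P : countType) (G : finType).

Inductive form : Type :=
| Atom : P -> form
| Neg : form -> form
| And : form -> form -> form
| Aw : G -> form -> form
| Impl : G -> form -> form
| Expl : G -> form -> form
| BoxApprox : G -> form -> form
| BoxCirc : G -> form -> form.

Fixpoint At (f : form) : P -> Prop :=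
  match f with
  | Atom p => fun q => q = p
  | Neg a => At a
  | And a b => fun q => At a q \/ At b q
  | Aw _ a | Impl _ a | Expl _ a | BoxApprox _ a | BoxCirc _ a => At a
  end.

Fixpoint in_FH (f : form) : Prop :=
  match f with
  | Atom _ => True
  | Neg a => in_FH a
  | And a b => in_FH a /\ in_FH b
  | Aw _ a | Impl _ a | Expl _ a => in_FH a
  | BoxApprox _ _ | BoxCirc _ _ => False
  end.

Record model : Type := Model {
  world : Type;
  world_inhabited : inhabited world;
  sim : G -> world -> world -> Prop;
  sim_equiv : forall i, equivalence world (sim i);
  aware : G -> world -> P -> Prop;
  aware_sim : forall i w v, sim i w v -> aware i w = aware i v;
  val : P -> world -> Prop
}.

Section Sem.
Variable M : model.

Definition approx (i : G) (w v : world M) : Prop :=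
  aware M i w = aware M i v /\ (forall p, aware M i w p -> (val M p w <-> val M p v)).

(* ∼_i ∘ ≈_i = {(w,v) | ∃t, w ≈_i t /\ t ∼_i v} *)
Definition comp_rel (i : G) (w v : world M) : Prop :=
  exists t, approx i w t /\ sim M i t v.

Definition circ_plus (i : G) : relation (world M) :=
  clos_trans (world M) (comp_rel i).

Fixpoint sat_AIL (w : world M) (f : form) : Prop :=
  match f with
  | Atom p => val M p w
  | Neg a => ~ sat_AIL w a
  | And a b => sat_AIL w a /\ sat_AIL w b
  | Aw i a => forall q, At a q -> aware M i w q
  | Impl i a => forall v, sim M i w v -> sat_AIL v a
  | Expl i a => (forall q, At a q -> aware M i w q) /\
                (forall v, circ_plus i w v -> sat_AIL v a)
  | BoxApprox i a => forall v, approx i w v -> sat_AIL v a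
  | BoxCirc i a => forall v, circ_plus i w v -> sat_AIL v a
  end.

(* FH semantics (only meaningful on L_FH formulas; the box clauses are
   irrelevant for formulas satisfying in_FH, given as in AIL). *)
Fixpoint sat_FH (w : world M) (f : form) : Prop :=
  match f with
  | Atom p => val M p w
  | Neg a => ~ sat_FH w a
  | And a b => sat_FH w a /\ sat_FH w b
  | Aw i a => forall q, At a q -> aware M i w q
  | Impl i a => forall v, sim M i w v -> sat_FH v a
  | Expl i a => (forall q, At a q -> aware M i w q) /\
                (forall v, sim M i w v -> sat_FH v a)
  | BoxApprox i a => forall v, approx i w v -> sat_FH v a
  | BoxCirc i a => forall v, circ_plus i w v -> sat_FH v a
  end.
End Sem.
End Logic.
Arguments world {P G}.
Arguments sim {P G}.
Arguments aware {P G}.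
Arguments val {P G}.
Arguments sat_FH {P G M}.
Arguments sat_AIL {P G M}.

From mathcomp Require Import all_boot.

Section FHToAIL.
Variables (P : countType) (G : finType).

(* FH explicit knowledge [E_i a] is [A_i a /\ I_i a]; awareness formulas only
   depend on the atoms of their argument, so they are left untranslated. *)
Fixpoint fh_to_ail (f : form P G) : form P G :=
  match f with
  | Neg a => Neg (fh_to_ail a)
  | And a b => And (fh_to_ail a) (fh_to_ail b)
  | Impl i a => Impl i (fh_to_ail a)
  | Expl i a => And (Aw i a) (Impl i (fh_to_ail a))
  | _ => f
  end.

Lemma sat_FH_fh_to_ail (f : form P G) (M : model P G) :
  in_FH f -> forall w : world M, sat_FH w f <-> sat_AIL w (fh_to_ail f).
Proof.
elim: f => //= [a IHa | a IHa b IHb | i a IHa | i a IHa] fhf w.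
- by have := IHa fhf w; tauto.
- by case: fhf => /IHa fha /IHb fhb; have := fha w; have := fhb w; tauto.
- by split=> alls v /alls /(IHa fhf v).
- by split=> -[awa alls]; split=> // v /alls /(IHa fhf v).
Qed.

End FHToAIL.

Arguments fh_to_ail {P G}.

Theorem lemma2 (P : countType) (G : finType) :
  forall phi : form P G, in_FH phi ->
  exists psi : form P G,
    forall (M : model P G) (w : world M), sat_FH w phi <-> sat_AIL w psi.
Proof.
move=> phi fh_phi; exists (fh_to_ail phi) => M w.
exact: sat_FH_fh_to_ail.
Qed.
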